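(* Let $G=G_n\langle t_1,\ldots,t_k\rangle$ be a Toeplitz graph. Then the clique number satisfies $\omega(G)\le k+1$, and equality holds if and only if $t_i=it_1$ for every $i\in[k]$.
   Context: For integers $n\ge 2$, $k\ge 1$ and $1\le t_1<t_2<\cdots<t_k\le n-1$, the Toeplitz graph $G_n\langle t_1,\ldots,t_k\rangle$ is the simple graph with vertex set $[n]=\{1,\ldots,n\}$ in which two distinct vertices $i,j$ are adjacent if and only if $|i-j|\in\{t_1,\ldots,t_k\}$. $\omega(G)$ is the maximum number of vertices of a clique of $G$. *)

From mathcomp Require Import all_boot.
Set Implicit Arguments. Unset Strict Implicit. Unset Printing Implicit Defensive.

(* Vertices of G_n<t_1,...,t_k> are represented by 'I_n (value v stands for
   vertex v+1 of [n]); differences are unaffected by this shift.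
   The generators t_1 < ... < t_k are the list t = [:: t_1; ...; t_k],
   so t_i = nth 0 t i.-1. *)

Definition natdist (a b : nat) : nat := (a - b) + (b - a).

Definition toeplitz_adj (n : nat) (t : seq nat) : rel 'I_n :=
  fun i j => (i != j) && (natdist i j \in t).

Definition is_clique (n : nat) (t : seq nat) (A : {set 'I_n}) : bool :=
  [forall i in A, forall j in A, (i != j) ==> toeplitz_adj t i j].

Definition clique_number (n : nat) (t : seq nat) : nat :=
  \max_(A : {set 'I_n} | is_clique t A) #|A|.

From mathcomp Require Import all_boot zify.
Set Implicit Arguments. Unset Strict Implicit. Unset Printing Implicit Defensive.

(* Let a0 be the least vertex of a clique A.  The offsets x - a0 of the other
   vertices are distinct elements of t, so #|A| <= k + 1.  If #|A| = k + 1 the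
   offsets are all of t, hence t is closed under positive differences: the
   difference of two offsets is the distance between two clique vertices.
   A strictly increasing list of positive numbers closed under positive
   differences is t_1, 2 t_1, ..., k t_1.  Conversely the vertices
   0, t_1, ..., k t_1 of such a progression form a clique of size k + 1. *)

Lemma natdistE a b : b <= a -> natdist a b = a - b.
Proof. by rewrite /natdist => le_ba; lia. Qed.

Lemma natdist_mul a b c : natdist (a * c) (b * c) = natdist a b * c.
Proof. by rewrite /natdist mulnDl !mulnBl. Qed.

Lemma clique_natdist n t (A : {set 'I_n}) x y :
  is_clique t A -> x \in A -> y \in A -> x != y -> natdist x y \in t.
Proof.
move=> /forallP clA xA yA neq_xy.
move: (clA x); rewrite xA => /forallP/(_ y); rewrite yA neq_xy.
by case/andP.
Qed.

Section CliqueOffsets.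

Variables (n : nat) (t : seq nat) (A : {set 'I_n}) (a0 : 'I_n).
Hypotheses (clA : is_clique t A) (a0A : a0 \in A).
Hypothesis a0_min : forall x, x \in A -> a0 <= x.

Definition offsets : seq nat := [seq nat_of_ord x - a0 | x <- enum (A :\ a0)].

Lemma offsets_uniq : uniq offsets.
Proof.
rewrite map_inj_in_uniq ?enum_uniq // => x y.
rewrite !mem_enum !inE => /andP[_ /a0_min le_x] /andP[_ /a0_min le_y] eq_xy.
by apply: ord_inj; rewrite -(subnK le_x) eq_xy subnK.
Qed.

Lemma offsets_sub : {subset offsets <= t}.
Proof.
move=> d /mapP[x]; rewrite mem_enum !inE => /andP[neq_x xA] ->.
by rewrite -(natdistE (a0_min xA)) (clique_natdist clA xA a0A neq_x).
Qed.

Lemma size_offsets : size offsets = #|A|.-1.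
Proof. by rewrite size_map -cardE (cardsD1 a0 A) a0A. Qed.

Lemma offsets_diff_closed :
  {in offsets &, forall x y, y < x -> x - y \in t}.
Proof.
move=> d e /mapP[p]; rewrite mem_enum !inE => /andP[_ pA] ->.
move=> /mapP[q]; rewrite mem_enum !inE => /andP[_ qA] -> lt_qp.
have le_a0p := a0_min pA; have le_a0q := a0_min qA.
have neq_pq : p != q by apply: contraTneq lt_qp => ->; rewrite ltnn.
have -> : p - a0 - (q - a0) = natdist p q by rewrite natdistE; lia.
exact: (clique_natdist clA pA qA neq_pq).
Qed.

End CliqueOffsets.

Lemma clique_min_vertex n (A : {set 'I_n}) :
  A != set0 -> exists2 a0 : 'I_n, a0 \in A & forall x, x \in A -> a0 <= x.
Proof.
by case/set0Pn => a aA; case: (arg_minnP (fun x : 'I_n => val x) aA) => a0; exists a0.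
Qed.

Lemma card_clique_le n t (A : {set 'I_n}) :
  is_clique t A -> #|A| <= (size t).+1.
Proof.
move=> clA; have [->|/clique_min_vertex[a0 a0A a0_min]] := eqVneq A set0.
  by rewrite cards0.
have := uniq_leq_size (offsets_uniq a0_min) (offsets_sub clA a0A a0_min).
by rewrite (size_offsets a0A) -ltnS; apply: leq_trans (leqSpred _).
Qed.

Lemma max_clique_diff_closed n t (A : {set 'I_n}) :
  is_clique t A -> #|A| = (size t).+1 ->
  {in t &, forall x y, y < x -> x - y \in t}.
Proof.
move=> clA cardA.
have /clique_min_vertex[a0 a0A a0_min] : A != set0.
  by rewrite -card_gt0 cardA.
have size_t : size t <= size (offsets A a0) by rewrite (size_offsets a0A) cardA.
have [_ eq_t] := uniq_min_size (offsets_uniq a0_min)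
  (offsets_sub clA a0A a0_min) size_t.
by move=> x y xt yt; apply: (offsets_diff_closed clA a0A a0_min); rewrite eq_t.
Qed.

Lemma diff_closed_sorted_nth (t : seq nat) :
  sorted ltn t -> 0 < nth 0 t 0 ->
  {in t &, forall x y, y < x -> x - y \in t} ->
  forall j, j < size t -> nth 0 t j = j.+1 * nth 0 t 0.
Proof.
move=> t_sorted c_gt0 closed; set c := nth 0 t 0.
elim/ltn_ind => -[|j] IH lt_Sj_t; first by rewrite mul1n.
have lt_j_t : j < size t := ltnW lt_Sj_t.
have lt_nth := sorted_ltn_nth ltn_trans 0 t_sorted.
set x := nth 0 t j.+1.
have lt_jc_x : j.+1 * c < x by rewrite -IH //; apply: lt_nth; rewrite ?inE.
have lt_cx : c < x by apply: lt_nth; rewrite ?inE //; apply: leq_trans lt_Sj_t.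
have xc_t : x - c \in t by apply: closed; rewrite ?mem_nth // (leq_trans _ lt_Sj_t).
(* x - c = t_i lies below x, so i <= j and t_i = (i+1) c; as t_j = (j+1) c < x, i = j. *)
set i := index (x - c) t.
have le_ij : i < j.+1.
  rewrite ltnNge; apply/negP => lt_ji.
  have t_le : sorted leq t by move: t_sorted; rewrite ltn_sorted_uniq_leq => /andP[].
  have := sorted_leq_nth leq_trans leqnn 0 t_le j.+1 i.
  rewrite !inE index_mem => /(_ lt_Sj_t xc_t lt_ji); rewrite nth_index //; lia.
have xcE : x - c = i.+1 * c by rewrite -IH ?nth_index ?index_mem.
have le_ji : j < i.+1 by rewrite -(ltn_pmul2r c_gt0); lia.
have eq_ij : i = j by lia.
by move: xcE; rewrite eq_ij [j.+2 * c]mulSn; lia.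
Qed.

Lemma clique_number_witness n t :
  exists2 A : {set 'I_n}, is_clique t A & #|A| = clique_number n t.
Proof.
have clique0 : is_clique t (set0 : {set 'I_n}).
  by apply/forallP => i; rewrite inE.
have nonempty : 0 < #|@is_clique n t| by apply/card_gt0P; exists set0.
have [A clA eqA] := eq_bigmax_cond (fun A : {set 'I_n} => #|A|) nonempty.
by exists A.
Qed.

Lemma progression_clique n t c k :
  0 < c -> k * c <= n -> (forall i, 1 <= i <= k -> i * c \in t) ->
  k.+1 <= clique_number n.+1 t.
Proof.
move=> c_gt0 le_kc_n mul_c_t.
pose f (j : 'I_k.+1) : 'I_n.+1 := inord (j * c).
have fE j : f j = j * c :> nat.
  by rewrite inordK // ltnS (leq_trans _ le_kc_n) // leq_mul2r -ltnS ltn_ord orbT.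
have f_inj : injective f.
  move=> j1 j2 /(congr1 val); rewrite /= !fE => /eqP.
  by rewrite eqn_mul2r eqn0Ngt c_gt0 => /eqP/ord_inj.
have cl_img : is_clique t (f @: [set: 'I_k.+1]).
  apply/forallP => x; apply/implyP => /imsetP[j1 _ ->].
  apply/forallP => y; apply/implyP => /imsetP[j2 _ ->].
  apply/implyP => neq_f; rewrite /toeplitz_adj neq_f !fE natdist_mul mul_c_t //.
  have neq_j : j1 != j2 by apply: contraNneq neq_f => ->.
  have := ltn_ord j1; have := ltn_ord j2; move: neq_j.
  rewrite -(inj_eq val_inj) /natdist /=; lia.
have := @leq_bigmax_cond _ (is_clique t) (fun A : {set 'I_n.+1} => #|A|) _ cl_img.
by rewrite card_imset // cardsT card_ord.
Qed.

Theorem theorem2p8 (n k : nat) (t : seq nat) :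
  2 <= n -> 1 <= k -> size t = k -> sorted ltn t ->
  (forall x, x \in t -> 1 <= x <= n - 1) ->
  clique_number n t <= k + 1 /\
  (clique_number n t = k + 1 <->
   (forall i, 1 <= i <= k -> nth 0 t i.-1 = i * nth 0 t 0)).
Proof.
move=> le2n k_gt0 size_t t_sorted t_range; subst k; rewrite addn1.
set c := nth 0 t 0.
have c_gt0 : 0 < c by case/andP: (t_range _ (mem_nth 0 k_gt0)).
have le_omega : clique_number n t <= (size t).+1.
  by apply/bigmax_leqP => A; apply: card_clique_le.
split=> //; split=> [eq_omega i /andP[i_gt0 le_i_t] | progression].
  have [A clA cardA] := clique_number_witness n t.
  have closed := max_clique_diff_closed clA (etrans cardA eq_omega).
  by rewrite -{2}(prednK i_gt0) diff_closed_sorted_nth // prednK.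
apply/eqP; rewrite eqn_leq le_omega /=.
case: n le2n t_range {le_omega} => // n _ t_range.
have last_t : (size t).-1 < size t by rewrite prednK.
apply: progression_clique c_gt0 _ _.
  have /andP[_] := t_range _ (mem_nth 0 last_t).
  by rewrite progression ?k_gt0 //= subn1.
move=> i range_i; rewrite -progression //.
by apply: mem_nth; case/andP: range_i => i_gt0 le_i_t; rewrite prednK.
Qed.
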